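(* Let $\mathrm{Cl}_{p,q}$ be the real Clifford algebra with generators $e_1,\dots,e_n$ ($n=p+q$) satisfying $e_ie_j=-e_je_i$ for $i\neq j$ and $e_i^2=\sigma_i\in\{1,-1\}$. Let $s\ge 1$ and let $A\in\mathrm{Cl}_{p,q}$ be a multivector lying in $\mathrm{span}[e_1,\dots,e_s]$, i.e. $A$ is a real linear combination of blades $e_S=e_{j_1}e_{j_2}\cdots e_{j_m}$ with $j_1<\dots<j_m$ in $\{1,\dots,s\}$ (so the maximal grade $r$ of $A$ satisfies $r\le s$). Put $k=2^{\lceil s/2\rceil}$. Define $m_0=1$ and, for $i=1,\dots,k$, \[ c_i=-\frac{k}{i}\,\langle A\,m_{i-1}\rangle_0,\qquad m_i=A\,m_{i-1}+c_i . \] Then the procedure terminates at step $k$ with $m_k=0$, i.e. $A\,m_{k-1}=-c_k$. Consequently, if $c_k\neq 0$ then $A$ is invertible and \[ A^{-1}=-\frac{m_{k-1}}{c_k}, \] while if $c_k=0$ the inverse of $A$ does not exist. The (reduced) characteristic polynomial of $A$ is \[ p_A(\lambda)=\lambda^k+c_1\lambda^{k-1}+\dots+c_{k-1}\lambda+c_k . \]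
   Context: $\langle X\rangle_0$ denotes the scalar (grade-0) part of a multivector $X$; the scalar product of multivectors is $X\ast Y=\langle XY\rangle_0$, so $c_i=-\frac{k}{i}\,A\ast m_{i-1}$. Adding a real number $c$ to a multivector means adding $c$ times the unit $1$. Products are Clifford products. The algebra is non-degenerate (every generator squares to $+1$ or $-1$). *)

From HB Require Import structures.
From mathcomp Require Import all_boot all_order all_algebra.
Set Implicit Arguments. Unset Strict Implicit. Unset Printing Implicit Defensive.
Import Order.TTheory GRing.Theory Num.Theory.
Local Open Scope ring_scope.

Section Clifford.
Variables (R : realFieldType) (n : nat) (sig : 'I_n -> bool).

(* A multivector: coefficient of the blade e_S for every S ⊆ {0..n-1}. *)
Local Notation mv := {ffun {set 'I_n} -> R}.

Definition gsq (i : 'I_n) : R := if sig i then 1 else -1.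

(* e_S e_T = blade_sign S T * e_{S Δ T}  (blades ordered by increasing index) *)
Definition blade_sign (S T : {set 'I_n}) : R :=
  (-1) ^+ #|[set ij : 'I_n * 'I_n | (ij.1 \in S) && (ij.2 \in T) && (ij.2 < ij.1)%N]|
  * \prod_(i in S :&: T) gsq i.

Definition symdiff (S T : {set 'I_n}) : {set 'I_n} := (S :\: T) :|: (T :\: S).

Definition cmul (A B : mv) : mv :=
  [ffun U => \sum_(S : {set 'I_n}) \sum_(T : {set 'I_n} | symdiff S T == U)
               A S * B T * blade_sign S T].

Definition blade (S : {set 'I_n}) : mv := [ffun U => (U == S)%:R].
Definition cone : mv := blade set0.

Definition cscale (c : R) (A : mv) : mv := [ffun U => c * A U].

Definition scal (A : mv) : R := A set0.

(* A lies in span[e_1,...,e_s] (0-indexed: generators e_i with i < s) *)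
Definition in_span (s : nat) (A : mv) : Prop :=
  forall S : {set 'I_n}, A S != 0 -> S \subset [set i : 'I_n | (i < s)%N].

Fixpoint fl_m (A : mv) (k i : nat) : mv :=
  match i with
  | 0 => cone
  | i'.+1 => let P := cmul A (fl_m A k i') in
             P + cscale (- (k%:R / (i'.+1)%:R) * scal P) cone
  end.

Definition fl_c (A : mv) (k i : nat) : R :=
  match i with
  | 0 => 1
  | i'.+1 => - (k%:R / (i'.+1)%:R) * scal (cmul A (fl_m A k i'))
  end.

Definition fl_poly (A : mv) (k : nat) : {poly R} :=
  'X^k + \sum_(1 <= i < k.+1) fl_c A k i *: 'X^(k - i).

Definition lmul_mx (A : mv) : 'M[R]_#|{: {set 'I_n}}| :=
  \matrix_(i, j) (cmul A (blade (enum_val j))) (enum_val i).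

End Clifford.
Notation mv R n := {ffun {set 'I_n} -> R}.

(* The subalgebra of Cl_{p,q} generated by e_1, ..., e_s has a faithful
   representation by complex matrices of size k = 2^ceil(s/2): a Jordan-Wigner
   family of 2 ceil(s/2) anticommuting matrices with the prescribed squares, the
   blade e_S going to the ordered product of the matrices indexed by S.  A
   non-scalar such product anticommutes with some generator, so it has trace 0 and
   the trace of the image of X is k <X>_0.  Hence the recursion defining m_i and
   c_i is the Faddeev-LeVerrier algorithm for the image of A: it ends with m_k = 0
   and its c_i are the coefficients of the characteristic polynomial p_A.  Thus
   A m_{k-1} = -c_k inverts A when c_k <> 0; when c_k = 0 and A is invertible,
   cancelling A gives c_i = (k/i) c_i, hence m_{k-1} = ... = m_0 = 1 = 0.  Finally
   the left regular representation of Cl_{p,q} has the same power traces as 2^n/k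
   diagonal copies of the image of A, so its characteristic polynomial is
   p_A^(2^n/k). *)

From HB Require Import structures.
From mathcomp Require Import all_boot all_order all_algebra.
From mathcomp Require Import perm zify complex.
Set Implicit Arguments. Unset Strict Implicit. Unset Printing Implicit Defensive.
Import Order.TTheory GRing.Theory Num.Theory.
Local Open Scope ring_scope.

(** * Derivative of a determinant *)

Section DerivDet.
Variable R : comNzRingType.

Lemma deriv_prod_seq (I : eqType) (r : seq I) (F : I -> {poly R}) : uniq r ->
  (\prod_(i <- r) F i)^`() =
  \sum_(j <- r) \prod_(i <- r) (if i == j then (F i)^`() else F i).
Proof.
elim: r => [|x r IH /= /andP[xr ur]]; first by rewrite !big_nil -polyC1 derivC.
rewrite !big_cons derivM IH // eqxx big_distrr /=; congr (_ * _ + _).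
  by apply: eq_big_seq => i ir; rewrite ifN //; apply: contraNneq xr => <-.
apply: eq_big_seq => j jr; rewrite big_cons ifN //.
by apply: contraNneq xr => ->.
Qed.

Lemma deriv_prod (I : finType) (F : I -> {poly R}) :
  (\prod_i F i)^`() = \sum_j \prod_i (if i == j then (F i)^`() else F i).
Proof. exact/deriv_prod_seq/index_enum_uniq. Qed.

Lemma deriv_det n (A : 'M[{poly R}]_n) :
  (\det A)^`() =
  \sum_j \det (\matrix_(a, b) if a == j then (A a b)^`() else A a b).
Proof.
rewrite /determinant (big_morph _ (@derivD _) (deriv0 _)) exchange_big /=.
apply: eq_bigr => s _.
have -> (p : {poly R}) : ((-1) ^+ odd_perm s * p)^`() = (-1) ^+ odd_perm s * p^`().
  by rewrite !mulr_sign; case: (odd_perm s); rewrite ?derivN.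
rewrite deriv_prod big_distrr; apply: eq_bigr => j _.
by congr (_ * _); apply: eq_bigr => i _; rewrite mxE.
Qed.

Lemma deriv_char_poly n (M : 'M[R]_n) :
  (char_poly M)^`() = \tr (\adj (char_poly_mx M)).
Proof.
rewrite /char_poly deriv_det; apply: eq_bigr => j _.
rewrite mxE (expand_det_row _ j) (bigD1 j) //= big1 ?addr0 => [|i ij].
  rewrite !mxE eqxx /= derivB derivMn derivX derivC subr0 mul1r.
  congr (_ * \det _); apply/matrixP => a b.
  by rewrite !mxE eq_sym (negPf (neq_lift j a)).
by rewrite !mxE eqxx eq_sym (negPf ij) mulr0n sub0r derivN derivC oppr0 mul0r.
Qed.

End DerivDet.

(** * The Faddeev-LeVerrier algorithm *)

Section FaddeevLeVerrier.
Variables (F : fieldType) (N : nat).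
Implicit Types M : 'M[F]_N.

Fixpoint fl_mx M i : 'M[F]_N :=
  if i is i'.+1 then
    M *m fl_mx M i' + (- ((i'.+1)%:R^-1 * \tr (M *m fl_mx M i')))%:M
  else 1%:M.

Definition fl_coef M i : F :=
  if i is i'.+1 then - ((i'.+1)%:R^-1 * \tr (M *m fl_mx M i')) else 1.

Lemma fl_mxS M i : fl_mx M i.+1 = M *m fl_mx M i + (fl_coef M i.+1)%:M.
Proof. by []. Qed.

Lemma fl_mx_comm M i : M * fl_mx M i = fl_mx M i * M.
Proof.
elim: i => [|i IH] /=; first by rewrite mulr1 mul1r.
rewrite -!mulmxE mulmxDr mulmxDl scalar_mxC; congr (_ + _).
by rewrite !mulmxE -[RHS]mulrA -IH.
Qed.

Lemma fl_mx_horner M i :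
  fl_mx M i = \sum_(j < i.+1) fl_coef M j *: M ^+ (i - j).
Proof.
elim: i => [|i IH]; first by rewrite big_ord1 /= expr0 scale1r.
rewrite fl_mxS big_ord_recr subnn expr0 scalemx1 IH mulmx_sumr; congr (_ + _).
apply: eq_bigr => j _.
by rewrite -scalemxAr mulmxE -exprS subSn //; exact: (ltn_ord j).
Qed.

Lemma fl_coef_newton M i :
  fl_coef M i.+1 =
  - ((i.+1)%:R^-1 * \sum_(j < i.+1) fl_coef M j * \tr (M ^+ (i.+1 - j))).
Proof.
rewrite /= fl_mx_horner mulmx_sumr raddf_sum /=; congr (- (_ * _)).
apply: eq_bigr => j _.
by rewrite -scalemxAr mxtraceZ mulmxE -exprS subSn // -ltnS.
Qed.

End FaddeevLeVerrier.

Lemma eq_fl_coef_tr (F : fieldType) N1 N2 (M1 : 'M[F]_N1) (M2 : 'M[F]_N2) :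
  (forall t, \tr (M1 ^+ t) = \tr (M2 ^+ t)) -> fl_coef M1 =1 fl_coef M2.
Proof.
move=> trE i; elim/ltn_ind: i => [[|i]] IH //.
rewrite !fl_coef_newton; congr (- (_ * _)); apply: eq_bigr => j _.
by rewrite IH // trE.
Qed.

Section CharPoly.
Variables (F : fieldType) (N : nat) (M : 'M[F]_N).
Hypothesis char0 : has_char0 F.

Let p := char_poly M.

Let adjX t : 'M[F]_N := \matrix_(a, b) ('X * \adj (char_poly_mx M) a b)`_t.

Lemma adjX_rec t : adjX t - M *m adjX t.+1 = (p`_t)%:M.
Proof.
apply/matrixP => a b; have /matrixP/(_ a b) := mul_mx_adj (char_poly_mx M).
rewrite !mxE => /(congr1 (coefp t)); rewrite /= coefMn => <-.
set adj := \adj (char_poly_mx M).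
have -> : \sum_j char_poly_mx M a j * adj j b =
          'X * adj a b - \sum_j (M a j)%:P * adj j b.
  rewrite (bigD1 a) //= [X in _ = _ - X](bigD1 a) //= opprD addrA !mxE eqxx.
  rewrite mulrBl; congr (_ + _); rewrite -sumrN; apply: eq_bigr => j ja.
  by rewrite !mxE eq_sym (negPf ja) sub0r mulNr.
rewrite coefB coef_sum mxE; congr (_ - _); apply: eq_bigr => j _.
by rewrite !mxE coefXM coefCM.
Qed.

Lemma mxtrace_adjX t : \tr (adjX t) = p`_t *+ t.
Proof.
have := deriv_char_poly M; rewrite /mxtrace -/p => dp.
rewrite (eq_bigr (fun i => ('X * \adj (char_poly_mx M) i i)`_t)) => [|i _].
  by rewrite -coef_sum -mulr_sumr -dp coefXM; case: t => // t; rewrite coef_deriv.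
by rewrite mxE.
Qed.

(* Above the degree of the characteristic polynomial, adjX t = M *m adjX t.+1,
   and adjX t vanishes for t beyond the degrees of all entries of the adjugate. *)
Lemma adjX_eq0 t : (N < t)%N -> adjX t = 0.
Proof.
pose size_adj (ab : 'I_N * 'I_N) := size ('X * \adj (char_poly_mx M) ab.1 ab.2)%R.
pose T := \max_ab size_adj ab.
suff adjX_le d : (N < t)%N -> (T <= t + d)%N -> adjX t = 0.
  by move=> Nt; apply: (adjX_le T Nt); rewrite leq_addl.
elim: d t => [|d IH] t Nt Tt.
  apply/matrixP => a b; rewrite !mxE nth_default //; rewrite addn0 in Tt.
  by have := @leq_bigmax _ size_adj (a, b); rewrite /size_adj /= mxE => /leq_trans; apply.
have adjXS : adjX t.+1 = 0 by apply: IH; rewrite ?addSnnS // ltnW.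
have := adjX_rec t; rewrite adjXS mulmx0 subr0 => ->.
by rewrite nth_default ?size_char_poly // raddf0.
Qed.

(* The Faddeev-LeVerrier iterates are the coefficients of X * adj(X - M), read
   downwards from X^N. *)
Lemma fl_adjX i : (i <= N)%N -> fl_mx M i = adjX (N - i) /\ fl_coef M i = p`_(N - i).
Proof.
elim: i => [_|i IH iN].
  have p_lead : p`_N = 1.
    by have /monicP := char_poly_monic M; rewrite lead_coefE size_char_poly.
  have := adjX_rec N; rewrite (adjX_eq0 (ltnSn N)) mulmx0 subr0 subn0 p_lead => ->.
  by split.
have [] := IH (ltnW iN); set t := (N - i.+1)%N.
have -> : (N - i = t.+1)%N by rewrite /t; lia.
move=> flE _; have Nt : N = (t + i.+1)%N by rewrite /t; lia.
have MadjX : M *m adjX t.+1 = adjX t - (p`_t)%:M.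
  by rewrite -(adjX_rec t) opprB addrC subrK.
have coefS : fl_coef M i.+1 = p`_t.
  have i1_neq0 : (i.+1)%:R != 0 :> F by rewrite ((pcharf0P F).1 char0).
  have pN : p`_t *+ N = p`_t *+ t + p`_t *+ i.+1 by rewrite -mulrnDr -Nt.
  rewrite /= flE MadjX raddfB /= mxtrace_adjX mxtrace_scalar pN opprD addrA.
  by rewrite subrr add0r mulrN opprK -[p`_t *+ _]mulr_natl mulKf.
by rewrite fl_mxS coefS flE MadjX subrK.
Qed.

Lemma fl_mx_eq0 : fl_mx M N = 0.
Proof.
have [-> _] := fl_adjX (leqnn N).
by apply/matrixP => a b; rewrite subnn !mxE coefXM.
Qed.

Lemma char_poly_fl_coef :
  char_poly M = \sum_(i < N.+1) fl_coef M i *: 'X^(N - i).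
Proof.
rewrite -[LHS]coefK size_char_poly poly_def (reindex_inj rev_ord_inj) /=.
by apply: eq_bigr => i _; rewrite subSS (fl_adjX _).2 // -ltnS.
Qed.

End CharPoly.

Lemma char_poly_eq_tr (F : fieldType) N1 N2 (M1 : 'M[F]_N1) (M2 : 'M[F]_N2) :
  has_char0 F -> N1 = N2 ->
  (forall t, \tr (M1 ^+ t) = \tr (M2 ^+ t)) -> char_poly M1 = char_poly M2.
Proof.
move=> char0 eqN trE; subst N2; rewrite !char_poly_fl_coef //.
by apply: eq_bigr => i _; rewrite (eq_fl_coef_tr trE).
Qed.

Section DupMx.
Variable R : comNzRingType.

Lemma block_diag_mxX m (D : 'M[R]_m) t :
  (block_mx D 0 0 D : 'M_(m + m)) ^+ t = block_mx (D ^+ t) 0 0 (D ^+ t).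
Proof.
elim: t => [|t IH]; first by rewrite !expr0 -scalar_mx_block.
by rewrite exprS IH -mulmxE mulmx_block !mulmx0 !mul0mx !addr0 !add0r !mulmxE -!exprS.
Qed.

Fixpoint dup_mx N (M : 'M[R]_N) j : 'M[R]_(iter j (fun m => m + m) N)%N :=
  match j with
  | 0 => M
  | j'.+1 => block_mx (dup_mx M j') 0 0 (dup_mx M j')
  end.

Lemma iter_double N j : iter j (fun m => m + m)%N N = (N * 2 ^ j)%N.
Proof. by elim: j => [|j /= ->]; rewrite ?muln1 // expnS; lia. Qed.

Lemma dup_mxX N (M : 'M[R]_N) j t : dup_mx M j ^+ t = dup_mx (M ^+ t) j.
Proof. by elim: j => [|j /= <-]; rewrite ?block_diag_mxX. Qed.

Lemma mxtrace_dup_mx N (M : 'M[R]_N) j : \tr (dup_mx M j) = \tr M *+ (2 ^ j).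
Proof.
elim: j => [|j /= IH]; first by rewrite mulr1n.
by rewrite mxtrace_block IH expnS mul2n -addnn mulrnDr.
Qed.

Lemma char_poly_dup_mx N (M : 'M[R]_N) j :
  char_poly (dup_mx M j) = char_poly M ^+ (2 ^ j).
Proof.
elim: j => [|j /= IH]; first by rewrite expr1.
move: IH; rewrite /char_poly char_block_diag_mx det_ublock => ->.
by rewrite -exprD addnn -mul2n -expnS.
Qed.

End DupMx.

Lemma map_mxX (aR rR : pzRingType) (f : {rmorphism aR -> rR}) N (M : 'M[aR]_N) t :
  map_mx f (M ^+ t) = map_mx f M ^+ t.
Proof.
elim: t => [|t IH]; first by rewrite !expr0 map_mx1.
by rewrite !exprS -!mulmxE map_mxM IH.
Qed.

(** * Monomials in anticommuting generators *)

Section Monomials.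
Variables (T : pzRingType) (g : nat -> T).

Definition gfactor (P : pred nat) j := if P j then g j else 1.
Definition gmono m (P : pred nat) := \prod_(j < m) gfactor P j.

Lemma gmonoS m P : gmono m.+1 P = gmono m P * gfactor P m.
Proof. exact: big_ord_recr. Qed.

Lemma gmono_pred0 m : gmono m pred0 = 1.
Proof. exact: big1. Qed.

Lemma eq_gmono m P Q : P =1 Q -> gmono m P = gmono m Q.
Proof. by move=> PQ; apply: eq_bigr => j _; rewrite /gfactor PQ. Qed.

Variables (sg : nat -> bool) (m0 : nat).

Definition sign_exp m (P Q : pred nat) : nat :=
  (\sum_(a < m) \sum_(b < m) (P a && Q b && (b < a)%N)
   + \sum_(a < m) (P a && Q a && ~~ sg a))%N.

Lemma sign_expS m P Q : sign_exp m.+1 P Q =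
  (sign_exp m P Q + \sum_(b < m) (P m && Q b) + (P m && Q m && ~~ sg m))%N.
Proof.
rewrite /sign_exp !big_ord_recr /= ltnn andbF addn0.
have -> : (\sum_(a < m) \sum_(b < m.+1) (P a && Q b && (b < a)) =
           \sum_(a < m) \sum_(b < m) (P a && Q b && (b < a)))%N.
  apply: eq_bigr => a _; rewrite big_ord_recr /= ltnNge (ltnW (ltn_ord a)).
  by rewrite andbF addn0.
have -> : (\sum_(b < m) (P m && Q b && (b < m)) = \sum_(b < m) (P m && Q b))%N.
  by apply: eq_bigr => b _; rewrite ltn_ord andbT.
by rewrite -!addnA; congr (_ + _); rewrite addnCA.
Qed.

Hypothesis g_anti : forall a b, (a < m0)%N -> (b < m0)%N -> a != b ->
  g a * g b = - (g b * g a).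
Hypothesis g_sq : forall a, (a < m0)%N -> g a * g a = (-1) ^+ (~~ sg a).

Lemma g_gmono_comm m a (P : pred nat) : (a < m0)%N -> {subset P <= gtn m0} ->
  g a * gmono m P = (-1) ^+ (\sum_(j < m) (P j && (j != a :> nat)))%N * (gmono m P * g a).
Proof.
move=> a_lt P_lt; elim: m => [|m IH].
  by rewrite /gmono !big_ord0 expr0 mul1r mulr1 mul1r.
have g_gfactor : g a * gfactor P m = (-1) ^+ (P m && (m != a)) * (gfactor P m * g a).
  rewrite /gfactor; case Pm: (P m) => /=; last by rewrite mulr1 mul1r expr0 mul1r.
  have [->|ma] := eqVneq m a; first by rewrite expr0 mul1r.
  by rewrite expr1 mulN1r g_anti 1?eq_sym //; apply: P_lt.
rewrite gmonoS big_ord_recr /= exprD mulrA IH -!mulrA g_gfactor.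
by congr (_ * _); rewrite [LHS]mulrA commr_sign -mulrA.
Qed.

Lemma gfactor_gmono_comm m (P Q : pred nat) :
  {subset P <= gtn m0} -> {subset Q <= gtn m0} ->
  gfactor P m * gmono m Q =
  (-1) ^+ (\sum_(b < m) (P m && Q b))%N * (gmono m Q * gfactor P m).
Proof.
move=> P_lt Q_lt; rewrite /gfactor; case Pm: (P m) => /=; last first.
  by rewrite big1 // expr0 mul1r mulr1 mul1r.
rewrite (g_gmono_comm _ (P_lt m Pm) Q_lt); congr ((-1) ^+ _ * _).
by apply: eq_bigr => j _; rewrite (ltn_eqF (ltn_ord j)) andbT.
Qed.

Lemma gmono_mul m (P Q : pred nat) :
  {subset P <= gtn m0} -> {subset Q <= gtn m0} ->
  gmono m P * gmono m Q = (-1) ^+ sign_exp m P Q * gmono m (fun j => P j (+) Q j).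
Proof.
move=> P_lt Q_lt; elim: m => [|m IH]; first by rewrite /gmono /sign_exp !big_ord0 mulr1.
have gfactor_mul : gfactor P m * gfactor Q m =
    (-1) ^+ (P m && Q m && ~~ sg m) * gfactor (fun j => P j (+) Q j) m.
  rewrite /gfactor; case Pm: (P m); case: (Q m) => /=;
    by rewrite ?expr0 ?mul1r ?mulr1 // g_sq //; apply: P_lt.
rewrite !gmonoS sign_expS.
set GP := gmono m P; set GQ := gmono m Q; set xP := gfactor P m; set xQ := gfactor Q m.
have -> : GP * xP * (GQ * xQ) = GP * (xP * GQ) * xQ by rewrite !mulrA.
rewrite gfactor_gmono_comm //.
have -> (e : nat) : GP * ((-1) ^+ e * (GQ * xP)) * xQ = (-1) ^+ e * (GP * GQ * (xP * xQ)).
  by rewrite !mulrA (commr_sign GP).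
rewrite IH gfactor_mul !mulrA -!exprD.
by rewrite -[X in X * gfactor _ _]mulrA commr_sign mulrA -exprD [(_ + sign_exp _ _ _)%N]addnC.
Qed.

End Monomials.

Section MonomialTrace.
Variables (F : fieldType) (K : nat) (g : nat -> 'M[F]_K) (sg : nat -> bool) (m0 : nat).
Hypothesis g_anti : forall a b, (a < m0)%N -> (b < m0)%N -> a != b ->
  g a * g b = - (g b * g a).
Hypothesis g_sq : forall a, (a < m0)%N -> g a * g a = (-1) ^+ (~~ sg a).
Hypothesis two_neq0 : 2%:R != 0 :> F.

Lemma mxtrace_gmono_anti m a (P : pred nat) : (a < m0)%N -> {subset P <= gtn m0} ->
  odd (\sum_(j < m) (P j && (j != a :> nat))) -> \tr (gmono g m P) = 0.
Proof.
move=> a_lt P_lt odd_count; set G := gmono g m P.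
have G_anti : g a * G = - (G * g a).
  by rewrite (g_gmono_comm g_anti) // -signr_odd odd_count mulN1r.
have trG_sq : \tr (G * (g a * g a)) = 0.
  have cycl : \tr (G * (g a * g a)) = \tr (g a * G * g a).
    by rewrite -mulrA -!mulmxE [RHS]mxtrace_mulC mulmxA.
  have tr_neg : \tr (G * (g a * g a)) = - \tr (G * (g a * g a)).
    by rewrite {1}cycl G_anti mulNr raddfN -mulrA.
  have /eqP : \tr (G * (g a * g a)) *+ 2 = 0 by rewrite mulr2n {2}tr_neg subrr.
  by rewrite -mulr_natr mulf_eq0 (negPf two_neq0) orbF => /eqP.
move: trG_sq; rewrite g_sq // commr_sign mulr_sign.
by case: (~~ sg a) => //; rewrite raddfN => /eqP; rewrite oppr_eq0 => /eqP.
Qed.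

(* A monomial of even length anticommutes with each of its factors; one of odd
   length anticommutes with any generator it misses, and one exists as m0 is even. *)
Lemma mxtrace_gmono_eq0 m (P : pred nat) : ~~ odd m0 -> {subset P <= gtn m0} ->
  (exists2 j, (j < m)%N & P j) -> \tr (gmono g m P) = 0.
Proof.
move=> m0_even P_lt [j0 j0_lt Pj0]; set c := (\sum_(j < m) P j)%N.
have [c_odd | c_even] := boolP (odd c).
  have [a a_out] : exists a : 'I_m0, ~~ ((a < m)%N && P a).
    case: (pickP (fun a : 'I_m0 => ~~ ((a < m)%N && P a))) => [a ?|all_in]; first by exists a.
    have P_lt_m0 j : (j < m)%N -> P j = (j < m0)%N.
      move=> j_lt; apply/idP/idP => [/P_lt //|j_lt0].
      by have /negbFE/andP[] := all_in (Ordinal j_lt0).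
    have m0_le : (m0 <= m)%N.
      case: m0 all_in {m0_even P_lt P_lt_m0} => // m0' all_in.
      by have /negbFE/andP[] := all_in ord_max.
    suff c_m0 : c = m0 by rewrite c_m0 (negPf m0_even) in c_odd.
    rewrite /c (eq_bigr (fun j : 'I_m => (j < m0 : nat))) => [|j _]; last by rewrite P_lt_m0.
    by rewrite -big_mkcond /= -(big_ord_widen _ (fun=> 1%N)) // sum1_card card_ord.
  apply: (mxtrace_gmono_anti (a := a)) => //; rewrite (eq_bigr (fun j : 'I_m => P j : nat)) //.
  move=> j _; have [ja|] := eqVneq (j : nat) a; last by rewrite andbT.
  by move: a_out; rewrite -ja ltn_ord /= andbF => /negPf ->.
apply: (mxtrace_gmono_anti (a := j0)) => //; first exact: P_lt.
pose j0' := Ordinal j0_lt; rewrite (bigD1 j0') //= eqxx andbF add0n.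
have -> : (\sum_(j < m | j != j0') (P j && (j != j0 :> nat)) =
           \sum_(j < m | j != j0') P j)%N.
  by apply: eq_bigr => j; rewrite -val_eqE /= => ->; rewrite andbT.
by move: c_even; rewrite /c (bigD1 j0') //= Pj0 add1n oddS negbK.
Qed.

End MonomialTrace.

(** * Jordan-Wigner matrices *)

Section JordanWigner.
Variables (F : fieldType) (im : F).
Hypothesis im_sq : im * im = -1.

Definition zblock n (A : 'M[F]_n) : 'M[F]_(n + n) := block_mx A 0 0 (- A).
Definition xblock n : 'M[F]_(n + n) := block_mx 0 1%:M 1%:M 0.
Definition yblock n : 'M[F]_(n + n) := block_mx 0 (- 1%:M) 1%:M 0.

Lemma block_mx1 n : block_mx 1 0 0 1 = 1 :> 'M[F]_(n + n).
Proof. exact/esym/scalar_mx_block. Qed.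

Local Notation mul_block :=
  (mulmx_block, mulmx0, mul0mx, addr0, add0r, mulmxN, mulNmx, mulmx1, mul1mx, opprK,
   opp_block_mx, oppr0).

Lemma zblockM n (A B : 'M[F]_n) : zblock A * zblock B = block_mx (A * B) 0 0 (A * B).
Proof. by rewrite -mulmxE !mul_block. Qed.

Lemma zblock_anti n (A B : 'M[F]_n) :
  A * B = - (B * A) -> zblock A * zblock B = - (zblock B * zblock A).
Proof. by move=> AB; rewrite !zblockM AB opp_block_mx oppr0. Qed.

Lemma zblock_sq n (A : 'M[F]_n) (b : bool) :
  A * A = (-1) ^+ b -> zblock A * zblock A = (-1) ^+ b.
Proof.
move=> AA; rewrite zblockM AA.
by case: (b); rewrite ?block_mx1 // -block_mx1 opp_block_mx oppr0.
Qed.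

Lemma zblock_xblock n (A : 'M[F]_n) : zblock A * xblock n = - (xblock n * zblock A).
Proof. by rewrite -!mulmxE !mul_block. Qed.

Lemma zblock_yblock n (A : 'M[F]_n) : zblock A * yblock n = - (yblock n * zblock A).
Proof. by rewrite -!mulmxE !mul_block. Qed.

Lemma xblock_yblock n : xblock n * yblock n = - (yblock n * xblock n).
Proof. by rewrite -!mulmxE !mul_block. Qed.

Lemma xblock_sq n : xblock n * xblock n = 1.
Proof. by rewrite -!mulmxE !mul_block block_mx1. Qed.

Lemma yblock_sq n : yblock n * yblock n = -1.
Proof. by rewrite -!mulmxE !mul_block -block_mx1 !mul_block. Qed.

Lemma scale_anti n (A B : 'M[F]_n) c d : A * B = - (B * A) ->
  (c *: A) * (d *: B) = - ((d *: B) * (c *: A)).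
Proof.
by move=> AB; rewrite -!mulmxE -!scalemxAl -!scalemxAr !mulmxE AB !scalerN !scalerA mulrC.
Qed.

Variable sg : nat -> bool.

(* 2h anticommuting matrices of size 2^h whose squares are (-1)^(~~ sg j); the
   scalar im corrects the squares of xblock and yblock where needed. *)
Fixpoint jw h : nat -> 'M[F]_(iter h (fun m => m + m) 1)%N :=
  match h with
  | 0 => fun=> 0
  | h'.+1 => fun j =>
      if (j < h'.*2)%N then zblock (jw h' j)
      else if j == h'.*2 then (if sg j then 1 else im) *: xblock _
      else (if sg j then im else 1) *: yblock _
  end.

Lemma jw_sq h a : (a < h.*2)%N -> jw h a * jw h a = (-1) ^+ (~~ sg a).
Proof.
elim: h a => // h IH a a_lt /=; case: ltnP => [/IH/zblock_sq //|_].
case: eqP => _; rewrite -!mulmxE -!scalemxAl -!scalemxAr !mulmxE scalerA;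
  by case: (sg a); rewrite ?xblock_sq ?yblock_sq ?mulr1 ?mul1r ?scale1r ?im_sq
       ?scaleN1r ?opprK.
Qed.

Lemma jw_anti h a b : (a < h.*2)%N -> (b < h.*2)%N -> a != b ->
  jw h a * jw h b = - (jw h b * jw h a).
Proof.
elim: h a b => // h IH.
suff lt_anti a b : (a < b)%N -> (b < h.+1.*2)%N ->
    jw h.+1 a * jw h.+1 b = - (jw h.+1 b * jw h.+1 a).
  move=> a b a_lt b_lt; rewrite neq_ltn => /orP[ab|ba]; first exact: lt_anti.
  by rewrite (lt_anti b a) ?opprK.
move=> ab b_lt /=; have [b_lt'|b_ge] := ltnP b h.*2.
  by rewrite (ltn_trans ab b_lt'); apply/zblock_anti/IH; rewrite ?(ltn_trans ab) ?ltn_eqF.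
have [a_lt'|a_ge] := ltnP a h.*2.
  case: eqP => _; rewrite -[zblock _]scale1r scale_anti //;
    [exact: zblock_xblock | exact: zblock_yblock].
have [-> ->] : a = h.*2 /\ b = h.*2.+1 by move: ab b_lt a_ge; rewrite doubleS; lia.
by rewrite eqxx (gtn_eqF (ltnSn _)) scale_anti // xblock_yblock.
Qed.

End JordanWigner.

(** * Blades and the spin representation *)

Section Blades.
Variables (R : realFieldType) (n : nat) (sig : 'I_n -> bool).
Local Notation mv := (mv R n).

(* Blade indices as predicates on nat, so that one generator family indexed by
   nat serves every n. *)
Definition natset (S : {set 'I_n}) : pred nat :=
  fun j => if insub j is Some i then i \in S else false.

Definition sig_nat (j : nat) : bool := if insub j is Some i then sig i else true.

Lemma natset_ord S (i : 'I_n) : natset S i = (i \in S).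
Proof. by rewrite /natset valK. Qed.

Lemma natset0 : natset set0 =1 pred0.
Proof. by move=> j; rewrite /natset; case: insub => // i; rewrite inE. Qed.

Lemma natset_symdiff S T j : natset (symdiff S T) j = natset S j (+) natset T j.
Proof.
by rewrite /natset; case: insub => // i; rewrite !inE; case: (i \in S); case: (i \in T).
Qed.

Lemma blade_signE S T :
  blade_sign R sig S T = (-1) ^+ sign_exp sig_nat n (natset S) (natset T).
Proof.
rewrite /blade_sign /sign_exp exprD; congr (_ * _).
  congr (_ ^+ _); rewrite -sum1_card big_mkcond /= (pair_big predT predT
     (fun a b : 'I_n => (natset S a && natset T b && (b < a)%N : nat))) /=.
  by apply: eq_bigr => [[a b]] _; rewrite !natset_ord !inE.
rewrite (eq_bigr (fun i => (-1) ^+ (~~ sig i))) => [|i _]; last by rewrite /gsq; case: (sig i).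
rewrite prodrXr big_mkcond; congr (_ ^+ _); apply: eq_bigr => i _.
by rewrite inE !natset_ord /sig_nat valK; case: (_ && _).
Qed.

Lemma blade_sign0l U : blade_sign R sig set0 U = 1.
Proof.
rewrite /blade_sign set0I big_set0 mulr1 (_ : [set _ | _] = set0) ?cards0 //.
by apply/setP => ij; rewrite !inE.
Qed.

Lemma symdiff_eq0 (S T : {set 'I_n}) : (symdiff S T == set0) = (S == T).
Proof.
apply/eqP/eqP => [ST|->]; last by rewrite /symdiff setDv setU0.
apply/setP => i; have /setP/(_ i) := ST; rewrite /symdiff !inE.
by case: (i \in S); case: (i \in T).
Qed.

Lemma symdiff_eqr (S U : {set 'I_n}) : (symdiff S U == U) = (S == set0).
Proof.
apply/eqP/eqP => [SU|->]; last by rewrite /symdiff set0D setD0 set0U.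
apply/setP => i; have /setP/(_ i) := SU; rewrite /symdiff !inE.
by case: (i \in S); case: (i \in U).
Qed.

Lemma cmul_blade_set0 (X : mv) T :
  cmul sig X (blade R T) set0 = X T * blade_sign R sig T T.
Proof.
rewrite ffunE (bigD1 T) //= [X in _ + X]big1 ?addr0 => [|S ST].
  rewrite (big_pred1 T) => [|U]; first by rewrite ffunE eqxx mulr1.
  by rewrite /= symdiff_eq0 eq_sym.
apply: big1 => U; rewrite symdiff_eq0 => /eqP SU.
by rewrite ffunE -SU (negPf ST) mulr0 mul0r.
Qed.

Lemma cmul_blade_diag (X : mv) U : cmul sig X (blade R U) U = X set0.
Proof.
rewrite ffunE (bigD1 set0) //= [X in _ + X]big1 ?addr0 => [|S S0].
  rewrite (big_pred1 U) => [|T]; last by rewrite /= /symdiff set0D setD0 set0U.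
  by rewrite ffunE eqxx mulr1 blade_sign0l mulr1.
apply: big1 => T /eqP STU; rewrite ffunE.
case: (T =P U) => [TU|_]; last by rewrite mulr0 mul0r.
by move: S0; rewrite -(symdiff_eqr S U) -{1}TU STU eqxx.
Qed.

Lemma cmul_blade_expand (X Y : mv) U :
  cmul sig X Y U = \sum_T cmul sig X (blade R T) U * Y T.
Proof.
rewrite ffunE; under [RHS]eq_bigr => T _ do rewrite ffunE mulr_suml.
rewrite exchange_big; apply: eq_bigr => S _ /=.
under [RHS]eq_bigr => T _ do rewrite mulr_suml.
rewrite [RHS]exchange_big; apply: eq_bigr => T _.
rewrite (bigD1 T) //= big1 ?addr0 => [|V VT]; first by rewrite ffunE eqxx mulr1 mulrAC.
by rewrite ffunE eq_sym (negPf VT) mulr0 !mul0r.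
Qed.

End Blades.

Section Span.
Variables (R : realFieldType) (n : nat) (sig : 'I_n -> bool) (s : nat).
Local Notation mv := (mv R n).

Lemma in_span_natset (X : mv) S : in_span s X -> X S != 0 -> {subset natset S <= gtn s}.
Proof.
move=> Xs XS j; rewrite !unfold_in /natset; case: insubP => // i _ <- iS.
by have := subsetP (Xs S XS) i iS; rewrite inE.
Qed.

Lemma in_span0 : in_span s (0 : mv).
Proof. by move=> S; rewrite ffunE eqxx. Qed.

Lemma in_span_blade (S : {set 'I_n}) :
  S \subset [set i : 'I_n | (i < s)%N] -> in_span s (blade R S).
Proof. by move=> Ss T; rewrite ffunE; case: (T =P S) => [-> //|_]; rewrite eqxx. Qed.

Lemma in_span_cone : in_span s (cone R n).
Proof. by apply: in_span_blade; rewrite sub0set. Qed.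

Lemma in_spanD (X Y : mv) : in_span s X -> in_span s Y -> in_span s (X + Y).
Proof.
move=> Xs Ys S; rewrite ffunE => XYS; have [XS|/Xs //] := eqVneq (X S) 0.
by apply: Ys; rewrite XS add0r in XYS.
Qed.

Lemma in_spanN (X : mv) : in_span s X -> in_span s (- X).
Proof. by move=> Xs S; rewrite ffunE oppr_eq0; apply: Xs. Qed.

Lemma in_span_scale c (X : mv) : in_span s X -> in_span s (cscale c X).
Proof. by move=> Xs S; rewrite ffunE mulf_eq0 negb_or => /andP[_ /Xs]. Qed.

Lemma in_span_cmul (X Y : mv) : in_span s X -> in_span s Y -> in_span s (cmul sig X Y).
Proof.
move=> Xs Ys U; rewrite ffunE; apply: contraNT => Us; apply/eqP.
apply: big1 => S _; apply: big1 => T /eqP STU.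
have [XS|/Xs SS] := eqVneq (X S) 0; first by rewrite XS !mul0r.
have [YT|/Ys Ts] := eqVneq (Y T) 0; first by rewrite YT mulr0 mul0r.
by move: Us; rewrite -STU /symdiff subUset !(subset_trans (subsetDl _ _)) //.
Qed.

Lemma in_span_fl_m (A : mv) k i : in_span s A -> in_span s (fl_m sig A k i).
Proof.
move=> As; elim: i => [|i IH] /=; first exact: in_span_cone.
by apply: in_spanD; [exact: in_span_cmul | exact/in_span_scale/in_span_cone].
Qed.

End Span.

Lemma complex_char0 (R : realFieldType) : has_char0 R[i].
Proof.
by apply/pcharf0P => m; rewrite -(rmorph_nat (real_complex R)) fmorph_eq0 pnatr_eq0.
Qed.

Lemma complex_i_sq (R : realFieldType) : 'i%C * 'i%C = -1 :> R[i].
Proof.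
apply/eqP; rewrite eq_complex /=.
by rewrite !(mul0r, mulr0, mul1r, mulr1, add0r, addr0, sub0r, oppr0) !eqxx.
Qed.

Section Representation.
Variables (R : realFieldType) (n : nat) (sig : 'I_n -> bool).
Local Notation mv := (mv R n).
Local Notation C := (complex R).
Local Notation toC := (real_complex R).

Variables (K : nat) (g : nat -> 'M[C]_K) (s m0 : nat).
Hypothesis g_anti : forall a b, (a < m0)%N -> (b < m0)%N -> a != b ->
  g a * g b = - (g b * g a).
Hypothesis g_sq : forall a, (a < m0)%N -> g a * g a = (-1) ^+ (~~ sig_nat sig a).
Hypothesis s_le_m0 : (s <= m0)%N.
Hypothesis m0_even : ~~ odd m0.
Hypothesis K_neq0 : K%:R != 0 :> C.

Definition clrep (X : mv) : 'M[C]_K := \sum_S toC (X S) *: gmono g n (natset S).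

Lemma clrepB : zmod_morphism clrep.
Proof.
by move=> X Y; rewrite /clrep -sumrB; apply: eq_bigr => S _; rewrite !ffunE rmorphB scalerBl.
Qed.

HB.instance Definition _ := GRing.isZmodMorphism.Build mv 'M[C]_K clrep clrepB.

Lemma clrep_blade S : clrep (blade R S) = gmono g n (natset S).
Proof.
rewrite /clrep (bigD1 S) //= big1 ?addr0 => [|T TS]; first by rewrite ffunE eqxx scale1r.
by rewrite ffunE (negPf TS) scale0r.
Qed.

Lemma clrep_cone : clrep (cone R n) = 1.
Proof. by rewrite clrep_blade (eq_gmono _ _ (@natset0 n)) gmono_pred0. Qed.

Lemma clrepZ c X : clrep (cscale c X) = toC c *: clrep X.
Proof.
by rewrite /clrep scaler_sumr; apply: eq_bigr => S _; rewrite ffunE rmorphM scalerA.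
Qed.

Let natset_lt (X : mv) S : in_span s X -> X S != 0 -> {subset natset S <= gtn m0}.
Proof.
move=> Xs XS j /(in_span_natset Xs XS); rewrite !unfold_in => /leq_trans; exact.
Qed.

Lemma clrep_mul (X Y : mv) : in_span s X -> in_span s Y ->
  clrep (cmul sig X Y) = clrep X * clrep Y.
Proof.
move=> Xs Ys; rewrite /clrep mulr_suml.
under eq_bigr => U _ do rewrite ffunE rmorph_sum scaler_suml.
rewrite exchange_big; apply: eq_bigr => S _ /=.
under eq_bigr => U _ do rewrite rmorph_sum scaler_suml.
rewrite (exchange_big_dep xpredT) //= mulr_sumr; apply: eq_bigr => T _.
rewrite (big_pred1 (symdiff S T)) => [|U]; last by rewrite /= eq_sym.
have [->|XS] := eqVneq (X S) 0; first by rewrite !(mul0r, rmorph0, scale0r).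
have [->|YT] := eqVneq (Y T) 0; first by rewrite !(mulr0, mul0r, rmorph0, scale0r).
rewrite -mulmxE -scalemxAl -scalemxAr mulmxE scalerA.
rewrite (gmono_mul g_anti g_sq n (natset_lt Xs XS) (natset_lt Ys YT)).
rewrite -(eq_gmono _ _ (natset_symdiff S T)) -signr_odd mulr_sign -scaler_sign signr_odd.
by rewrite scalerA blade_signE !rmorphM rmorph_sign.
Qed.

Lemma mxtrace_clrep (X : mv) : in_span s X -> \tr (clrep X) = K%:R * toC (X set0).
Proof.
move=> Xs; rewrite /clrep raddf_sum (bigD1 set0) //= big1 ?addr0 => [|S S0].
  by rewrite mxtraceZ (eq_gmono _ _ (@natset0 n)) gmono_pred0 mxtrace1 mulrC.
have [->|XS] := eqVneq (X S) 0; first by rewrite rmorph0 scale0r mxtrace0.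
have two_neq0 : 2%:R != 0 :> C by rewrite ((pcharf0P _).1 (complex_char0 R)).
rewrite mxtraceZ (mxtrace_gmono_eq0 g_anti g_sq two_neq0 m0_even (natset_lt Xs XS)).
  by rewrite mulr0.
by have [i iS] := set0Pn _ S0; exists i; rewrite ?natset_ord.
Qed.

Lemma clrep_inj (X : mv) : in_span s X -> clrep X = 0 -> X = 0.
Proof.
move=> Xs X0; apply/ffunP => T; rewrite ffunE; apply/eqP; apply: contraT => XT.
have Ts : in_span s (blade R T).
  apply/in_span_blade/subsetP => i iT; rewrite inE.
  by apply: (in_span_natset Xs XT); rewrite [_ \in _]natset_ord.
have := mxtrace_clrep (in_span_cmul (sig := sig) Xs Ts).
rewrite clrep_mul // X0 mul0r mxtrace0.
move/esym/eqP; rewrite mulf_eq0 (negPf K_neq0) fmorph_eq0 cmul_blade_set0.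
by rewrite mulf_eq0 (negPf XT) blade_signE signr_eq0.
Qed.

Lemma clrep_fl (A : mv) k i : in_span s A -> k = K ->
  clrep (fl_m sig A k i) = fl_mx (clrep A) i /\ toC (fl_c sig A k i) = fl_coef (clrep A) i.
Proof.
move=> As kK; elim: i => [|i [IH _]]; first by rewrite /= clrep_cone rmorph1.
have mAs : in_span s (fl_m sig A k i) := in_span_fl_m As.
have coefS : toC (fl_c sig A k i.+1) = fl_coef (clrep A) i.+1.
  have AmAs := in_span_cmul (sig := sig) As mAs.
  rewrite /= -IH mulmxE -clrep_mul // mxtrace_clrep // kK /scal.
  by rewrite rmorphM rmorphN rmorphM fmorphV !rmorph_nat mulNr mulrA [_ * K%:R]mulrC.
split=> //; rewrite fl_mxS -coefS /= raddfD /= clrepZ clrep_cone clrep_mul // IH.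
by rewrite mulmxE scalemx1.
Qed.

End Representation.

Lemma uphalf_double_ge s : (s <= (uphalf s).*2)%N.
Proof. by rewrite uphalfE; have := odd_double_half s.+1; case: odd => /=; lia. Qed.

Lemma uphalf_le s : (uphalf s <= s)%N.
Proof. by rewrite uphalfE; have := odd_double_half s.+1; case: odd => /=; lia. Qed.

Section SpinRepresentation.
Variables (R : realFieldType) (n : nat) (sig : 'I_n -> bool).
Local Notation mv := (mv R n).

Definition spin_gen h : nat -> 'M[R[i]]_(iter h (fun m => m + m) 1)%N :=
  jw 'i%C (sig_nat sig) h.

Lemma spin_gen_anti h a b : (a < h.*2)%N -> (b < h.*2)%N -> a != b ->
  spin_gen h a * spin_gen h b = - (spin_gen h b * spin_gen h a).
Proof. exact: jw_anti. Qed.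

Lemma spin_gen_sq h a : (a < h.*2)%N ->
  spin_gen h a * spin_gen h a = (-1) ^+ (~~ sig_nat sig a).
Proof. exact: (jw_sq (complex_i_sq R) (sig_nat sig)). Qed.

Lemma spin_dim h : iter h (fun m => m + m)%N 1%N = (2 ^ h)%N.
Proof. by rewrite iter_double mul1n. Qed.

Lemma spin_dim_neq0 h : (iter h (fun m => m + m) 1)%N%:R != 0 :> R[i].
Proof. by rewrite spin_dim ((pcharf0P _).1 (complex_char0 R)) expn_eq0. Qed.

Local Notation spin_rep s := (clrep (spin_gen (uphalf s))).

Lemma spin_rep_mul s (X Y : mv) : in_span s X -> in_span s Y ->
  spin_rep s (cmul sig X Y) = spin_rep s X * spin_rep s Y.
Proof.
exact: (clrep_mul (@spin_gen_anti (uphalf s)) (@spin_gen_sq (uphalf s))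
  (uphalf_double_ge s)).
Qed.

Lemma spin_rep_inj s (X Y : mv) : in_span s X -> in_span s Y ->
  spin_rep s X = spin_rep s Y -> X = Y.
Proof.
move=> Xs Ys XY; apply/eqP; rewrite -subr_eq0; apply/eqP.
apply: (clrep_inj (@spin_gen_anti (uphalf s)) (@spin_gen_sq (uphalf s))
  (uphalf_double_ge s) (negbT (odd_double _)) (spin_dim_neq0 _) (in_spanD Xs (in_spanN Ys))).
by rewrite clrepB XY subrr.
Qed.

Lemma mxtrace_spin_rep s (X : mv) : in_span s X ->
  \tr (spin_rep s X) = (2 ^ uphalf s)%:R * real_complex R (X set0).
Proof.
rewrite -spin_dim; exact: (mxtrace_clrep (@spin_gen_anti (uphalf s))
  (@spin_gen_sq (uphalf s)) (uphalf_double_ge s) (negbT (odd_double _))).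
Qed.

Lemma spin_rep_fl s (A : mv) i : in_span s A ->
  let k := (2 ^ uphalf s)%N in
  spin_rep s (fl_m sig A k i) = fl_mx (spin_rep s A) i /\
  real_complex R (fl_c sig A k i) = fl_coef (spin_rep s A) i.
Proof.
move=> As k; apply: (clrep_fl (@spin_gen_anti (uphalf s)) (@spin_gen_sq (uphalf s))
  (uphalf_double_ge s) (negbT (odd_double _)) _ As).
by rewrite spin_dim.
Qed.

Lemma in_span_all (X : mv) : in_span n X.
Proof. by move=> S _; apply/subsetP => i _; rewrite inE. Qed.

Local Notation rep := (spin_rep n).

Lemma rep_mul (X Y : mv) : rep (cmul sig X Y) = rep X * rep Y.
Proof. by apply: spin_rep_mul; apply: in_span_all. Qed.

Lemma rep_inj : injective (rep : mv -> _).
Proof. by move=> X Y; apply: spin_rep_inj; apply: in_span_all. Qed.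

Lemma cmulA (X Y Z : mv) : cmul sig (cmul sig X Y) Z = cmul sig X (cmul sig Y Z).
Proof. by apply: rep_inj; rewrite !rep_mul mulrA. Qed.

Lemma cmul1r (X : mv) : cmul sig (cone R n) X = X.
Proof. by apply: rep_inj; rewrite rep_mul clrep_cone mul1r. Qed.

Lemma cmulr0 (X : mv) : cmul sig X 0 = 0.
Proof. by apply: rep_inj; rewrite rep_mul raddf0 mulr0. Qed.

Lemma cmulZr c (X Y : mv) : cmul sig X (cscale c Y) = cscale c (cmul sig X Y).
Proof. by apply: rep_inj; rewrite rep_mul !clrepZ rep_mul -!mulmxE scalemxAr. Qed.

Lemma cmulZl c (X Y : mv) : cmul sig (cscale c X) Y = cscale c (cmul sig X Y).
Proof. by apply: rep_inj; rewrite rep_mul !clrepZ rep_mul -!mulmxE scalemxAl. Qed.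

End SpinRepresentation.

(** * Inverse and characteristic polynomial *)

Section LeftRegular.
Variables (R : realFieldType) (n : nat) (sig : 'I_n -> bool).
Local Notation mv := (mv R n).

Definition cpow (A : mv) t := iter t (cmul sig A) (cone R n).

Lemma in_span_cpow s (A : mv) t : in_span s A -> in_span s (cpow A t).
Proof.
by move=> As; elim: t => [|t IH]; [exact: in_span_cone | exact: in_span_cmul].
Qed.

Lemma lmul_mx_mul (X Y : mv) :
  lmul_mx sig (cmul sig X Y) = lmul_mx sig X *m lmul_mx sig Y.
Proof.
apply/matrixP => i j; rewrite !mxE cmulA cmul_blade_expand.
rewrite (eq_bigl [in {: {set 'I_n}}]) // big_enum_val.
by apply: eq_bigr => l _; rewrite !mxE.
Qed.

Lemma lmul_mx_cone : lmul_mx sig (cone R n) = 1%:M.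
Proof. by apply/matrixP => i j; rewrite !mxE cmul1r ffunE (inj_eq enum_val_inj). Qed.

Lemma lmul_mx_cpow (A : mv) t : lmul_mx sig (cpow A t) = lmul_mx sig A ^+ t.
Proof.
elim: t => [|t IH]; first by rewrite expr0 lmul_mx_cone.
by rewrite [cpow A t.+1]iterS lmul_mx_mul IH exprS mulmxE.
Qed.

Lemma card_set_ord : #|{: {set 'I_n}}| = (2 ^ n)%N.
Proof. by rewrite -cardsT -powersetT card_powerset cardsT card_ord. Qed.

Lemma mxtrace_lmul_mx (X : mv) : \tr (lmul_mx sig X) = (2 ^ n)%:R * X set0.
Proof.
rewrite /mxtrace (eq_bigr (fun=> X set0)) => [|i _]; last by rewrite mxE cmul_blade_diag.
by rewrite sumr_const card_ord card_set_ord mulr_natl.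
Qed.

End LeftRegular.

Section Recursion.
Variables (R : realFieldType) (n : nat) (sig : 'I_n -> bool).
Local Notation mv := (mv R n).

Lemma fl_polyE (A : mv) k :
  fl_poly sig A k = \sum_(i < k.+1) fl_c sig A k i *: 'X^(k - i).
Proof. by rewrite /fl_poly big_ord_recl /= subn0 scale1r big_add1 big_mkord. Qed.

Lemma fl_mS (A : mv) k i :
  fl_m sig A k i.+1 = cmul sig A (fl_m sig A k i) + cscale (fl_c sig A k i.+1) (cone R n).
Proof. by []. Qed.

Lemma cone_neq0 : cone R n != 0.
Proof. by apply/eqP => /ffunP/(_ set0); rewrite !ffunE eqxx => /eqP; rewrite oner_eq0. Qed.

Lemma addr_cscale_eq0 (X : mv) c : X + cscale c (cone R n) = 0 -> X = cscale (- c) (cone R n).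
Proof. by move/eqP; rewrite addr_eq0 => /eqP ->; apply/ffunP => U; rewrite !ffunE mulNr. Qed.

Lemma fl_m_eq0_pred (A : mv) k i : (i.+1 < k)%N ->
  (forall X, cmul sig A X = 0 -> X = 0) -> fl_m sig A k i.+1 = 0 -> fl_m sig A k i = 0.
Proof.
move=> ik A_reg; rewrite fl_mS => /addr_cscale_eq0 AmE; apply: A_reg; rewrite AmE.
suff -> : fl_c sig A k i.+1 = 0 by rewrite oppr0; apply/ffunP => U; rewrite !ffunE mul0r.
set c := fl_c sig A k i.+1.
have c_fix : c = k%:R / i.+1%:R * c.
  by rewrite {1}/c /fl_c AmE /scal !ffunE eqxx mulr1 mulrN mulNr opprK.
apply/eqP; move: c_fix => /eqP; rewrite -subr_eq0 -{1}[c]mul1r -mulrBl mulf_eq0.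
by rewrite subr_eq0 eq_sym => /orP[/eqP/divr1_eq/eqP|//]; rewrite eqr_nat gtn_eqF.
Qed.

End Recursion.

Section CliffordInverse.
Variables (R : realFieldType) (n : nat) (sig : 'I_n -> bool) (s : nat) (A : mv R n).
Hypothesis As : in_span s A.
Local Notation k := (2 ^ uphalf s)%N.
Local Notation spin_rep := (clrep (spin_gen R sig (uphalf s))).

Lemma fl_m_terminates : fl_m sig A k k = 0.
Proof.
apply: (spin_rep_inj (sig := sig) (s := s)); [exact: in_span_fl_m | exact: in_span0 |].
by rewrite raddf0 (spin_rep_fl _ _ As).1 -spin_dim (fl_mx_eq0 _ (complex_char0 R)).
Qed.

Lemma cmul_fl_m_last : cmul sig A (fl_m sig A k k.-1) = cscale (- fl_c sig A k k) (cone R n).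
Proof.
apply: addr_cscale_eq0; have := fl_mS sig A k k.-1.
by rewrite prednK ?expn_gt0 // fl_m_terminates.
Qed.

Lemma fl_m_comm i : cmul sig A (fl_m sig A k i) = cmul sig (fl_m sig A k i) A.
Proof.
have mAs : in_span s (fl_m sig A k i) := in_span_fl_m As.
apply: (spin_rep_inj (sig := sig) (s := s)); try exact: in_span_cmul.
by rewrite !spin_rep_mul // (spin_rep_fl _ _ As).1 fl_mx_comm.
Qed.

Lemma fl_inverse : fl_c sig A k k != 0 ->
  let B := cscale (- (fl_c sig A k k)^-1) (fl_m sig A k k.-1) in
  cmul sig A B = cone R n /\ cmul sig B A = cone R n.
Proof.
move=> ck_neq0 B; suff AB : cmul sig A B = cone R n.
  by split=> //; rewrite cmulZl -fl_m_comm -cmulZr.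
rewrite cmulZr cmul_fl_m_last; apply/ffunP => U.
by rewrite !ffunE mulrA mulrNN mulVf // mul1r.
Qed.

Lemma fl_no_inverse : fl_c sig A k k = 0 ->
  ~ exists B, cmul sig A B = cone R n /\ cmul sig B A = cone R n.
Proof.
move=> ck0 [B [_ BA]].
have A_reg X : cmul sig A X = 0 -> X = 0.
  by move=> AX; rewrite -(cmul1r sig X) -BA cmulA AX cmulr0.
have k_gt0 : (0 < k)%N by rewrite expn_gt0.
have fl_m_down d : (d < k)%N -> fl_m sig A k (k.-1 - d) = 0.
  elim: d => [_|d IH dk].
    rewrite subn0; apply: A_reg; rewrite cmul_fl_m_last ck0 oppr0.
    by apply/ffunP => U; rewrite !ffunE mul0r.
  have dk' : (d < k.-1)%N by rewrite -ltnS prednK.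
  apply: (fl_m_eq0_pred _ A_reg); rewrite subnSK //; last exact/IH/ltnW.
  by rewrite (leq_ltn_trans (leq_subr _ _)) // ltn_predL.
have := fl_m_down k.-1; rewrite subnn ltn_predL => /(_ k_gt0) /eqP.
by rewrite (negPf (cone_neq0 R n)).
Qed.

Lemma spin_rep_cpow t : spin_rep (cpow sig A t) = spin_rep A ^+ t.
Proof.
elim: t => [|t IH]; first by rewrite expr0 clrep_cone.
rewrite [cpow _ _ t.+1]iterS -/(cpow sig A t) spin_rep_mul ?IH ?exprS //; exact: in_span_cpow.
Qed.

Lemma map_fl_poly : map_poly (real_complex R) (fl_poly sig A k) = char_poly (spin_rep A).
Proof.
rewrite char_poly_fl_coef; last exact: complex_char0.
under eq_bigr => i _ do rewrite -(spin_rep_fl _ _ As).2.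
rewrite spin_dim fl_polyE rmorph_sum /=; apply: eq_bigr => i _.
by rewrite map_polyZ map_polyXn.
Qed.

Lemma char_poly_lmul_mx : (s <= n)%N ->
  char_poly (lmul_mx sig A) = fl_poly sig A k ^+ (2 ^ n %/ k).
Proof.
move=> sn; have hn : (uphalf s <= n)%N := leq_trans (uphalf_le s) sn.
rewrite -(expnB (ltn0Sn 1) hn); apply: (map_poly_inj (real_complex R)).
rewrite map_char_poly rmorphXn /= map_fl_poly -char_poly_dup_mx.
apply: char_poly_eq_tr; first exact: complex_char0.
  by rewrite card_set_ord !iter_double mul1n -expnD subnKC.
move=> t; rewrite dup_mxX mxtrace_dup_mx -map_mxX trace_map_mx -lmul_mx_cpow.
rewrite mxtrace_lmul_mx -spin_rep_cpow (mxtrace_spin_rep _ (in_span_cpow As)).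
by rewrite rmorphM rmorph_nat /= -mulrnAl -mulrnA -expnD subnKC.
Qed.

End CliffordInverse.

Theorem theorem3 (R : realFieldType) (n : nat) (sig : 'I_n -> bool)
    (s : nat) (A : mv R n) :
  (1 <= s <= n)%N -> in_span s A ->
  let k := (2 ^ uphalf s)%N in
  [/\ fl_m sig A k k = 0,
      (fl_c sig A k k != 0 ->
         let B := cscale (- (fl_c sig A k k)^-1) (fl_m sig A k k.-1) in
         cmul sig A B = cone R n /\ cmul sig B A = cone R n),
      (fl_c sig A k k = 0 ->
         ~ exists B : mv R n, cmul sig A B = cone R n /\ cmul sig B A = cone R n)
    & char_poly (lmul_mx sig A) = fl_poly sig A k ^+ (2 ^ n %/ k)].
Proof.
move=> /andP[_ sn] As k; split.
- exact: fl_m_terminates.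
- exact: fl_inverse.
- exact: fl_no_inverse.
- exact: char_poly_lmul_mx.
Qed.
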